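(* Let $G$ be a connected finite simple undirected graph with at least two vertices, $W:V_G\to\mathbb{R}$ a potential, $\psi$ the ground state of $H_{G,W}$ with $\psi(x)>0$ for all $x$ and $\sum_x\psi(x)^2=1$, and $\gamma_H$ the gap between the smallest and second-smallest eigenvalues of $H_{G,W}$. For each ordered pair $(x,y)$ of distinct vertices choose a path $\gamma_{xy}$ in $G$ from $x$ to $y$ that traverses no edge more than once, and let $\Gamma$ be this collection of paths. Then $\gamma_H\ge 1/\kappa'$, where $$\kappa'=\max_{e}\sum_{\gamma_{xy}\ni e}\psi(x)^2\psi(y)^2\sum_{g\in\gamma_{xy}}\frac{1}{\psi(g_1)\psi(g_2)},$$ the maximum is over edges $e$ of $G$, the outer sum is over the paths in $\Gamma$ that use the edge $e$, the inner sum is over the edges $g$ of the path $\gamma_{xy}$, and $g_1,g_2$ denote the endpoints of $g$.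
   Context: For a finite simple undirected graph $G$ with vertex set $V_G$, let $\mathcal{H}_G$ be the complex Hilbert space with orthonormal basis $\{|x\rangle : x\in V_G\}$. The graph Laplacian is $L_G=\sum_{x} d_x |x\rangle\langle x| - \sum_{x\sim y}|x\rangle\langle y|$, where $d_x$ is the degree of $x$ and the second sum runs over ordered pairs of adjacent vertices. For a potential $W:V_G\to\mathbb{R}$, $H_{G,W}=L_G+\sum_{x} W(x)|x\rangle\langle x|$. For connected $G$ the ground state is nondegenerate and can be chosen with strictly positive amplitudes (Perron–Frobenius). *)

From HB Require Import structures.
From mathcomp Require Import all_boot all_order all_algebra.
From mathcomp Require Import reals.
Set Implicit Arguments. Unset Strict Implicit. Unset Printing Implicit Defensive.
Import Order.TTheory GRing.Theory Num.Theory.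
Local Open Scope ring_scope.

Definition simple_graph (n : nat) (e : rel 'I_n) : Prop :=
  symmetric e /\ irreflexive e.

Definition connected_graph (n : nat) (e : rel 'I_n) : Prop :=
  forall x y : 'I_n, connect e x y.

Definition deg (n : nat) (e : rel 'I_n) (x : 'I_n) : nat := #|[set y | e x y]|.

Definition hamiltonian (R : realType) (n : nat) (e : rel 'I_n) (W : 'I_n -> R)
  : 'M[R]_n :=
  \matrix_(i, j) (if i == j then (deg e i)%:R + W i
                  else if e i j then -1 else 0).

(* A path from x given by its tail p (vertex list x :: p); its traversed edges
   are the consecutive pairs. *)
Definition path_edges (n : nat) (x : 'I_n) (p : seq 'I_n) : seq ('I_n * 'I_n) :=
  zip (x :: p) p.

Definition uedge (n : nat) (ab : 'I_n * 'I_n) : {set 'I_n} := [set ab.1; ab.2].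

Definition edge_simple_path (n : nat) (e : rel 'I_n) (x y : 'I_n) (p : seq 'I_n)
  : Prop :=
  [/\ path e x p, last x p = y & uniq (map (@uedge n) (path_edges x p))].

(* the quantity kappa' : maximum over edges {u,v} (enumerated as ordered
   adjacent pairs; the summand is symmetric in u,v) of the weighted load. *)
Definition kappa' (R : realType) (n : nat) (e : rel 'I_n) (psi : 'I_n -> R)
  (Gam : 'I_n -> 'I_n -> seq 'I_n) : R :=
  \big[Num.max/0]_(u : 'I_n | true) \big[Num.max/0]_(v : 'I_n | e u v)
    \sum_(x : 'I_n) \sum_(y : 'I_n |
         (x != y) && (uedge (u, v) \in map (@uedge n) (path_edges x (Gam x y))))
       (psi x ^+ 2 * psi y ^+ 2 *
        \sum_(g <- path_edges x (Gam x y)) (psi g.1 * psi g.2)^-1).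

From HB Require Import structures.
From mathcomp Require Import all_boot all_order all_algebra.
From mathcomp Require Import reals.
From mathcomp Require Import ring.
Import Order.TTheory GRing.Theory Num.Theory.
Set Implicit Arguments.
Unset Strict Implicit.
Unset Printing Implicit Defensive.
Local Open Scope ring_scope.

(* Write an eigenvector for lambda2 as F = g psi (ground-state transform).  As F
   is orthogonal to psi, the psi^2-weighted variance
   sum_{x,y} psi_x^2 psi_y^2 (g_x - g_y)^2 equals 2 |F|^2, while the eigenvalue
   equations turn the Dirichlet form sum_{u~v} psi_u psi_v (g_v - g_u)^2 into
   2 (lambda2 - lambda1) |F|^2.  Telescoping g along each path gamma_xy and
   applying Cauchy-Schwarz with the weights psi(g1) psi(g2) bounds the variance
   by kappa' times the Dirichlet form (canonical paths), so
   1 <= kappa' (lambda2 - lambda1). *)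

Lemma sum_sqr_le_suminv_mul (R : realFieldType) (I : Type) (r : seq I)
    (w c : I -> R) : (forall i, 0 < w i) ->
  (\sum_(i <- r) c i) ^+ 2 <= (\sum_(i <- r) (w i)^-1) * \sum_(i <- r) w i * c i ^+ 2.
Proof.
move=> w_gt0; pose a i j := (w i)^-1 * (w j * c j ^+ 2).
have amgm i j : 2 * (c i * c j) <= a i j + a j i.
  rewrite -subr_ge0.
  have -> : a i j + a j i - 2 * (c i * c j) = (w j * c j - w i * c i) ^+ 2 / (w i * w j).
    by rewrite /a; field; rewrite !gt_eqF.
  by rewrite divr_ge0 ?sqr_ge0 // ltW ?mulr_gt0.
have a_sym : \sum_(i <- r) \sum_(j <- r) a j i = \sum_(i <- r) \sum_(j <- r) a i j.
  exact: exchange_big.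
have -> : (\sum_(i <- r) (w i)^-1) * \sum_(j <- r) w j * c j ^+ 2 =
          \sum_(i <- r) \sum_(j <- r) a i j.
  by rewrite mulr_suml; apply: eq_bigr => i _; rewrite mulr_sumr.
rewrite expr2 mulr_suml -(ler_pM2l (ltr0Sn R 1)) [X in _ <= X]mulr_natl [X in _ <= X]mulr2n.
rewrite -{2}a_sym -big_split mulr_sumr /=; apply: ler_sum => i _.
by rewrite !mulr_sumr -big_split; apply: ler_sum => j _; exact: amgm.
Qed.

Lemma sum_sqr_diff (R : comNzRingType) (I : Type) (r : seq I) (p f : I -> R) :
  \sum_(x <- r) \sum_(y <- r) p x * p y * (f x - f y) ^+ 2 =
  2 * ((\sum_(x <- r) p x) * (\sum_(x <- r) p x * f x ^+ 2)
       - (\sum_(x <- r) p x * f x) ^+ 2).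
Proof.
transitivity (\sum_(x <- r) (p x * f x ^+ 2 * \sum_(y <- r) p y
    + p x * \sum_(y <- r) p y * f y ^+ 2
    - 2 * (p x * f x) * \sum_(y <- r) p y * f y)).
  apply: eq_bigr => x _; rewrite !mulr_sumr -big_split -sumrB /=.
  by apply: eq_bigr => y _; ring.
by rewrite sumrB big_split -!mulr_suml -mulr_sumr /=; ring.
Qed.

Lemma eigenvectors_orthogonal (F : fieldType) (n : nat) (A : 'M[F]_n)
    (u v : 'rV[F]_n) (a b : F) :
  A^T = A -> u *m A = a *: u -> v *m A = b *: v -> a != b -> u *m v^T = 0.
Proof.
move=> symA Eu Ev neq_ab.
have : a *: (u *m v^T) = b *: (u *m v^T).
  by rewrite [LHS]scalemxAl -Eu -mulmxA -{1}symA -trmx_mul Ev linearZ /= scalemxAr.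
by move/eqP; rewrite -subr_eq0 -scalerBl scaler_eq0 subr_eq0 (negbTE neq_ab) => /eqP.
Qed.

Lemma sumr_sqr_row_gt0 (R : realDomainType) (n : nat) (v : 'rV[R]_n) :
  v != 0 -> 0 < \sum_i v 0 i ^+ 2.
Proof.
move=> v_neq0; rewrite lt_def sumr_ge0 ?andbT => [|i _]; last exact: sqr_ge0.
apply: contra v_neq0 => /eqP v0; apply/eqP/rowP => i; rewrite mxE; apply/eqP.
by rewrite -sqrf_eq0; apply/eqP/(psumr_eq0P _ v0) => // j _; exact: sqr_ge0.
Qed.

Lemma ground_state_variance (R : fieldType) (T : finType) (psi F : T -> R) :
  (forall x, psi x != 0) -> \sum_x psi x ^+ 2 = 1 -> \sum_x psi x * F x = 0 ->
  \sum_x \sum_y psi x ^+ 2 * psi y ^+ 2 * (F x / psi x - F y / psi y) ^+ 2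
  = 2 * \sum_x F x ^+ 2.
Proof.
move=> psi_neq0 psi_norm psi_F_orth.
have weighted_mean : \sum_x psi x ^+ 2 * (F x / psi x) = 0.
  by rewrite -[RHS]psi_F_orth; apply: eq_bigr => x _; field.
have weighted_sqr : \sum_x psi x ^+ 2 * (F x / psi x) ^+ 2 = \sum_x F x ^+ 2.
  by apply: eq_bigr => x _; field.
by rewrite sum_sqr_diff psi_norm weighted_mean weighted_sqr expr0n mul1r subr0.
Qed.

Definition nbr_sum {R : nmodType} {T : finType} (e : rel T) (X : T -> R) (j : T) : R :=
  \sum_i (if e i j then X i else 0).

Lemma ground_state_dirichlet (R : fieldType) (T : finType) (e : rel T)
    (c psi F : T -> R) (lambda1 lambda2 : R) :
  symmetric e -> (forall x, psi x != 0) ->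
  (forall j, nbr_sum e psi j = (c j - lambda1) * psi j) ->
  (forall j, nbr_sum e F j = (c j - lambda2) * F j) ->
  \sum_u \sum_v (if e u v then psi u * psi v * (F v / psi v - F u / psi u) ^+ 2 else 0)
  = 2 * ((lambda2 - lambda1) * \sum_j F j ^+ 2).
Proof.
move=> e_sym psi_neq0 psi_eigen F_eigen.
pose a u v := psi u * (F v ^+ 2 / psi v) - F u * F v.
have a_half : \sum_v \sum_u (if e u v then a u v else 0) =
              (lambda2 - lambda1) * \sum_j F j ^+ 2.
  rewrite mulr_sumr; apply: eq_bigr => v _.
  transitivity (nbr_sum e psi v * (F v ^+ 2 / psi v) - nbr_sum e F v * F v).
    rewrite /nbr_sum !mulr_suml -sumrB; apply: eq_bigr => u _.
    by case: (e u v); rewrite ?mul0r ?subr0.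
  by rewrite psi_eigen F_eigen; field.
transitivity (\sum_u \sum_v (if e u v then a u v else 0) +
              \sum_u \sum_v (if e v u then a v u else 0)).
  rewrite -big_split /=; apply: eq_bigr => u _; rewrite -big_split /=; apply: eq_bigr => v _.
  rewrite (e_sym v u); case: (e u v); rewrite ?addr0 //.
  by rewrite /a; field; rewrite !psi_neq0.
by rewrite -a_half [X in X + _]exchange_big mulr_natl mulr2n.
Qed.

Section Hamiltonian.

Variables (R : realType) (n : nat) (e : rel 'I_n) (W : 'I_n -> R).

Lemma hamiltonian_sym : symmetric e -> (hamiltonian e W)^T = hamiltonian e W.
Proof.
by move=> e_sym; apply/matrixP => i j; rewrite !mxE eq_sym e_sym; case: eqP => // ->.
Qed.

Lemma row_mul_hamiltonian (X : 'I_n -> R) j : irreflexive e ->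
  ((\row_i X i) *m hamiltonian e W) 0 j =
  ((deg e j)%:R + W j) * X j - nbr_sum e X j.
Proof.
move=> e_irr; rewrite mxE (bigD1 j) //= /nbr_sum [in RHS](bigD1 j) //= e_irr add0r !mxE eqxx.
rewrite mulrC -sumrN; congr (_ + _); apply: eq_bigr => i /negbTE neq_ij.
by rewrite !mxE neq_ij; case: (e i j); rewrite ?mulrN1 ?mulr0 ?oppr0.
Qed.

Lemma nbr_sum_eigen (X : 'I_n -> R) (lambda : R) j : irreflexive e ->
  (\row_i X i) *m hamiltonian e W = lambda *: \row_i X i ->
  nbr_sum e X j = ((deg e j)%:R + W j - lambda) * X j.
Proof.
move=> e_irr EX; have := congr1 (fun M : 'rV_n => M 0 j) EX.
by rewrite /= row_mul_hamiltonian // !mxE => eq_j; rewrite mulrBl -eq_j; ring.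
Qed.

End Hamiltonian.

Section CanonicalPaths.

Variables (R : realType) (n : nat) (e : rel 'I_n) (psi : 'I_n -> R).
Hypothesis psi_gt0 : forall x, 0 < psi x.

Lemma telescope_path_edges (g : 'I_n -> R) x p :
  g (last x p) - g x = \sum_(z <- path_edges x p) (g z.2 - g z.1).
Proof.
elim: p x => [|y p IHp] x; first by rewrite /path_edges /= big_nil subrr.
by rewrite /path_edges /= big_cons -/(path_edges y p) -IHp [RHS]addrC addrA subrK.
Qed.

Lemma path_edges_rel x p z : path e x p -> z \in path_edges x p -> e z.1 z.2.
Proof.
elim: p x => [|y p IHp] x //= /andP [exy yp].
by rewrite /path_edges /= in_cons => /orP [/eqP -> //|]; exact: IHp.
Qed.

Lemma sum_path_edges_le (H : 'I_n -> 'I_n -> R) x p :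
  path e x p -> uniq (map (@uedge n) (path_edges x p)) -> (forall u v, 0 <= H u v) ->
  \sum_(z <- path_edges x p) H z.1 z.2 <=
  \sum_u \sum_v (if e u v && (uedge (u, v) \in map (@uedge n) (path_edges x p))
                 then H u v else 0).
Proof.
move=> ep up H_ge0; rewrite big_uniq; last exact: map_uniq up.
rewrite pair_big /= big_mkcond /=; apply: ler_sum => [[u v]] _ /=.
case: ifP => z_in; last by case: ifP.
by rewrite (path_edges_rel ep z_in) map_f.
Qed.

Lemma path_energy_bound (g : 'I_n -> R) x p :
  path e x p -> uniq (map (@uedge n) (path_edges x p)) ->
  (g (last x p) - g x) ^+ 2 <=
  (\sum_(z <- path_edges x p) (psi z.1 * psi z.2)^-1) *
  \sum_u \sum_v (if e u v && (uedge (u, v) \in map (@uedge n) (path_edges x p))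
                 then psi u * psi v * (g v - g u) ^+ 2 else 0).
Proof.
move=> ep up; rewrite telescope_path_edges.
have w_gt0 (z : 'I_n * 'I_n) : 0 < psi z.1 * psi z.2 by rewrite mulr_gt0.
apply: le_trans (sum_sqr_le_suminv_mul _ (fun z => g z.2 - g z.1) w_gt0) _.
rewrite ler_wpM2l ?sumr_ge0 // => [z _|]; first by rewrite invr_ge0 ltW ?mulr_gt0.
apply: (sum_path_edges_le (H := fun u v => psi u * psi v * (g v - g u) ^+ 2)) => // u v.
by rewrite mulr_ge0 ?sqr_ge0 ?mulr_ge0 ?ltW.
Qed.

Variable Gam : 'I_n -> 'I_n -> seq 'I_n.

Lemma le_kappa' u v : e u v ->
  \sum_x \sum_(y | (x != y) &&
         (uedge (u, v) \in map (@uedge n) (path_edges x (Gam x y))))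
       (psi x ^+ 2 * psi y ^+ 2 *
        \sum_(z <- path_edges x (Gam x y)) (psi z.1 * psi z.2)^-1)
  <= kappa' e psi Gam.
Proof.
by move=> euv; apply: le_trans (le_bigmax_cond _ _ isT); exact: le_bigmax_cond.
Qed.

Lemma canonical_paths_poincare (g : 'I_n -> R) :
  (forall x y, x != y -> edge_simple_path e x y (Gam x y)) ->
  \sum_x \sum_y psi x ^+ 2 * psi y ^+ 2 * (g x - g y) ^+ 2 <=
  kappa' e psi Gam *
  \sum_u \sum_v (if e u v then psi u * psi v * (g v - g u) ^+ 2 else 0).
Proof.
move=> Gam_paths.
pose h u v := psi u * psi v * (g v - g u) ^+ 2.
pose L x y := \sum_(z <- path_edges x (Gam x y)) (psi z.1 * psi z.2)^-1.
pose uses x y u v := uedge (u, v) \in map (@uedge n) (path_edges x (Gam x y)).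
pose term (x y u v : 'I_n) := if (x != y) && e u v && uses x y u v
                     then psi x ^+ 2 * psi y ^+ 2 * L x y * h u v else 0.
have pair_bound x y :
    psi x ^+ 2 * psi y ^+ 2 * (g x - g y) ^+ 2 <= \sum_u \sum_v term x y u v.
  have [<-|neq_xy] := eqVneq x y.
    by rewrite subrr expr0n mulr0 big1 // => u _; rewrite big1 // => v _; rewrite /term eqxx.
  have [ep last_p up] := Gam_paths x y neq_xy.
  have -> : \sum_u \sum_v term x y u v =
            psi x ^+ 2 * psi y ^+ 2 * L x y *
            \sum_u \sum_v (if e u v && uses x y u v then h u v else 0).
    rewrite mulr_sumr; apply: eq_bigr => u _; rewrite mulr_sumr; apply: eq_bigr => v _.
    by rewrite /term neq_xy; case: ifP; rewrite ?mulr0.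
  have energy : (g x - g y) ^+ 2 <=
      L x y * \sum_u \sum_v (if e u v && uses x y u v then h u v else 0).
    by rewrite -sqrrN opprB -{1}last_p; exact: path_energy_bound.
  apply: le_trans (ler_wpM2l _ energy) _; first by rewrite mulr_ge0 ?sqr_ge0.
  by rewrite mulrA.
have load_bound u v : \sum_x \sum_y term x y u v <=
    (if e u v then kappa' e psi Gam * h u v else 0).
  case: ifP => euv; last first.
    by rewrite big1 // => x _; rewrite big1 // => y _; rewrite /term euv andbF.
  apply: le_trans (ler_wpM2r _ (le_kappa' euv)); last by rewrite mulr_ge0 ?sqr_ge0 ?mulr_ge0 ?ltW.
  rewrite mulr_suml; apply: ler_sum => x _; rewrite mulr_suml [X in _ <= X]big_mkcond /=.
  by apply: ler_sum => y _; rewrite /term euv andbT; case: ifP; rewrite ?mul0r.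
rewrite mulr_sumr; apply: le_trans (ler_sum _ (fun x _ => ler_sum _ (fun y _ => pair_bound x y))) _.
rewrite (eq_bigr (fun x => \sum_u \sum_v \sum_y term x y u v)); last first.
  by move=> x _; rewrite exchange_big; apply: eq_bigr => u _; rewrite exchange_big.
rewrite exchange_big; apply: ler_sum => u _; rewrite exchange_big mulr_sumr.
apply: ler_sum => v _; apply: le_trans (load_bound u v) _.
by case: (e u v); rewrite ?mulr0.
Qed.

End CanonicalPaths.

Theorem mainTheorem6 (R : realType) (n : nat) (e : rel 'I_n) (W : 'I_n -> R)
  (psi : 'I_n -> R) (lambda1 lambda2 : R) (Gam : 'I_n -> 'I_n -> seq 'I_n) :
  (2 <= n)%N ->
  simple_graph e ->
  connected_graph e ->
  (forall x, 0 < psi x) ->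
  \sum_x psi x ^+ 2 = 1 ->
  (\row_i psi i) *m hamiltonian e W = lambda1 *: (\row_i psi i) ->
  (forall mu, eigenvalue (hamiltonian e W) mu -> lambda1 <= mu) ->
  eigenvalue (hamiltonian e W) lambda2 ->
  lambda1 < lambda2 ->
  (forall mu, eigenvalue (hamiltonian e W) mu -> mu = lambda1 \/ lambda2 <= mu) ->
  (forall x y, x != y -> edge_simple_path e x y (Gam x y)) ->
  1 / kappa' e psi Gam <= lambda2 - lambda1.
Proof.
move=> _ [e_sym e_irr] _ psi_gt0 psi_norm Epsi _ /eigenvalueP [v Ev v_neq0] lt12 _
  Gam_paths.
pose F (i : 'I_n) : R := v 0 i; pose N := \sum_i F i ^+ 2.
have psi_neq0 x : psi x != 0 by rewrite gt_eqF.
have EF : (\row_i F i) *m hamiltonian e W = lambda2 *: \row_i F i.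
  by rewrite (_ : \row_i F i = v) //; apply/rowP => i; rewrite mxE.
have orth : \sum_i psi i * F i = 0.
  have := eigenvectors_orthogonal (hamiltonian_sym W e_sym) Epsi EF (negbT (lt_eqF lt12)).
  by move/matrixP/(_ 0 0); rewrite !mxE => uv0; rewrite -[RHS]uv0; apply: eq_bigr => i _; rewrite !mxE.
have N_gt0 : 0 < N := sumr_sqr_row_gt0 v_neq0.
have variance := ground_state_variance psi_neq0 psi_norm orth.
have dirichlet := ground_state_dirichlet (c := fun j => (deg e j)%:R + W j) e_sym
  psi_neq0 (fun j => nbr_sum_eigen j e_irr Epsi) (fun j => nbr_sum_eigen j e_irr EF).
have := canonical_paths_poincare psi_gt0 (fun i => F i / psi i) Gam_paths.
rewrite variance dirichlet => ineq.
have gap_gt0 : 0 < lambda2 - lambda1 by rewrite subr_gt0.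
have kappa_gap : 2 * N * 1 <= 2 * N * (kappa' e psi Gam * (lambda2 - lambda1)).
  by rewrite mulr1 (_ : 2 * N * _ = kappa' e psi Gam * (2 * ((lambda2 - lambda1) * N)))
    //; ring.
rewrite ler_pM2l ?mulr_gt0 // in kappa_gap.
have kappa_gt0 : 0 < kappa' e psi Gam.
  by rewrite -(pmulr_lgt0 _ gap_gt0) (lt_le_trans ltr01 kappa_gap).
by rewrite ler_pdivrMr // mulrC.
Qed.
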